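(* Let $G$ be a finite group and $p$ a prime with $\gcd(p-1,|G|)=1$. Suppose $|G'|=p^2$ and $|G'\cap Z(G)|=p$. Then: (a) $\Pr(G)=\frac{2p^2-1}{p^4}$ if $C_G(G')$ is abelian, and $\Pr(G)=\frac{1}{p^4}\left(\frac{p-1}{p^{2s-1}}+p^2+p-1\right)$ otherwise; (b) $|G/Z(G)|=p^3$ if $C_G(G')$ is abelian, and $|G/Z(G)|\in\{p^{2s+2},p^{2s+3}\}$ otherwise; where, when $C_G(G')$ is non-abelian, $s$ is the positive integer with $p^{2s}=|C_G(G'):Z(C_G(G'))|$. Moreover, writing $N=G'\cap Z(G)$ and $\bar G = G/N$, $\hat G = G/Z(G)$, we have $|\bar G : Z(\bar G)| = |\hat G : Z(\hat G)| = p^2$.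
   Context: $G$ is a finite group, $G'$ its commutator subgroup, $Z(G)$ its center, $C_G(G')$ the centralizer of $G'$ in $G$. The commutativity degree is $\Pr(G)=\frac{|\{(x,y)\in G\times G : xy=yx\}|}{|G|^2}$. *)

From mathcomp Require Import all_boot all_order all_algebra all_fingroup all_solvable.
Set Implicit Arguments. Unset Strict Implicit. Unset Printing Implicit Defensive.
Import GRing.Theory Num.Theory.

Definition comm_pairs (gT : finGroupType) (G : {set gT}) : {set gT * gT} :=
  [set xy in setX G G | (xy.1 * xy.2 == xy.2 * xy.1)%g].

Definition comm_degree (gT : finGroupType) (G : {set gT}) : rat :=
  (#|comm_pairs G|%:R / (#|G| ^ 2)%:R)%R.

From mathcomp Require Import all_boot all_order all_algebra all_fingroup all_solvable.
From mathcomp Require Import ring.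
Import GRing.Theory Num.Theory.

(* Write D = G', N = D :&: Z(G) and C = C_G(D).  As |D : N| = p and p - 1 is
   prime to |G|, G acts trivially on D / N, so [D, G] <= N is central.  For h
   in D \ N the map g |-> [g, h] is then a homomorphism from G onto N with
   kernel C, so |G : C| = p; for y outside C the map c |-> [c, y] is a
   homomorphism from C onto D, so |C : C_C(y)| = p^2.  Conjugation moves the
   elements of C only within their cosets of D, whence C' <= N and every
   element of C \ Z(C) has a centraliser of index p in C.  These centraliser
   sizes count the commuting pairs, which gives Pr(G); the same commutator maps
   on Z(C) and on the preimage of N give |G / Z(G)| and the centres of G / N
   and G / Z(G).  Finally a group K with central K' of prime order q has
   |K : Z(K)| = q^(2s): two non-commuting x, y cut out H = C_K(x, y) of index
   q^2 with Z(H) = Z(K). *)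

Set Implicit Arguments.
Unset Strict Implicit.
Unset Printing Implicit Defensive.

Open Scope group_scope.

Lemma prime_subgroup_eq (gT : finGroupType) (P B : {group gT}) g :
  prime #|P| -> B \subset P -> g \in B -> g != 1 -> B :=: P.
Proof.
move=> prP sBP Bg ntg; apply/eqP; rewrite eqEsubset sBP prime_meetG //.
by apply/trivgPn; exists g; rewrite // inE Bg (subsetP sBP).
Qed.

Section CommgMorphism.

Variables (gT : finGroupType) (K A : {group gT}) (x : gT).
Hypotheses (commKxA : {in K, forall k, [~ k, x] \in A}) (cKA : K \subset 'C(A)).

Lemma commg_morphM : {in K &, {morph (fun k => [~ k, x]) : a b / a * b}}.
Proof.
move=> a b Ka Kb /=; rewrite commMgJ; congr (_ * _).
by rewrite /conjg -(centP (subsetP cKA b Kb)) ?commKxA // mulKg.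
Qed.

Definition commg_morphism := Morphism commg_morphM.

Lemma commg_morphismE k : commg_morphism k = [~ k, x].
Proof. by []. Qed.

Lemma ker_commg_morphism : 'ker commg_morphism = 'C_K[x].
Proof.
apply/setP=> k; apply/idP/idP => [kerk | /setIP[Kk /cent1P cxk]].
  have Kk := dom_ker kerk; rewrite inE Kk.
  by move/(kerP _ Kk): kerk; rewrite commg_morphismE => /eqP/commgP/cent1P.
by apply/(kerP _ Kk); rewrite commg_morphismE; apply/eqP/commgP.
Qed.

Lemma morphim_commg_sub : commg_morphism @* K \subset A.
Proof. by apply/subsetP=> _ /morphimP[k _ Kk ->]; apply: commKxA. Qed.

Lemma mem_morphim_commg k : k \in K -> [~ k, x] \in commg_morphism @* K.
Proof. by move=> Kk; apply: (mem_morphim commg_morphism Kk Kk). Qed.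

Lemma card_morphim_commg : #|commg_morphism @* K| = #|K : 'C_K[x]|.
Proof. by rewrite card_morphim setIid ker_commg_morphism. Qed.

Lemma morphim_commg_prime k :
  prime #|A| -> k \in K -> [~ k, x] != 1 -> commg_morphism @* K = A.
Proof.
move=> prA Kk ntkx.
exact: prime_subgroup_eq prA morphim_commg_sub (mem_morphim_commg Kk) ntkx.
Qed.

End CommgMorphism.

Lemma prime_index_sub_eq (gT : finGroupType) (H K G : {group gT}) :
  prime #|G : H| -> H \subset K -> K \subset G -> ~~ (K \subset H) -> K :=: G.
Proof.
move=> prGH sHK sKG nsKH; have sHG := subset_trans sHK sKG.
have /maxgroupP[_ maxH] := p_index_maximal sHG prGH.
apply/eqP; rewrite eqEsubset sKG /=; apply: contraR nsKH => nsGK.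
by rewrite (maxH K) // properE sKG.
Qed.

Lemma mem_cosetpre_cent1 (gT : finGroupType) (H : {group gT}) g x :
  g \in 'N(H) -> x \in 'N(H) ->
  (g \in coset H @*^-1 'C[coset H x]) = ([~ g, x] \in H).
Proof.
move=> nHg nHx; apply/morphpreP/idP => [[_ /cent1P/commgP] | Hgx].
  by rewrite -morphR // => /eqP/coset_idr; apply; rewrite groupR.
by split=> //; apply/cent1P/commgP; rewrite -morphR //; apply/eqP/coset_id.
Qed.

Lemma mem_cent_der (gT : finGroupType) (G : {group gT}) y :
  y \in G -> {in G, forall g, [~ g, y] \in 'Z(G)} -> y \in 'C_G(G^`(1)).
Proof.
move=> Gy commGyZ.
have cGZ : G \subset 'C('Z(G)) by rewrite centsC subsetIr.
set f := commg_morphism commGyZ cGZ.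
have abf : abelian (f @* G).
  exact: abelianS (morphim_commg_sub _ _) (center_abelian G).
have sG'ker : G^`(1) \subset 'ker f.
  by rewrite ker_trivg_morphim der_sub morphim_der // (derG1P abf) subxx.
rewrite inE Gy /= -sub_cent1; apply: subset_trans sG'ker _.
by rewrite ker_commg_morphism subsetIr.
Qed.

Section PrimeCentralDerived.

Variables (gT : finGroupType) (q : nat) (K : {group gT}).
Hypotheses (pr_q : prime q) (oK' : #|K^`(1)| = q) (sK'Z : K^`(1) \subset 'Z(K)).

Let cKK' : K \subset 'C(K^`(1)).
Proof. by rewrite centsC (subset_trans sK'Z) ?subsetIr. Qed.

Let commK_der (L : {group gT}) u :
  L \subset K -> u \in K -> {in L, forall l, [~ l, u] \in K^`(1)}.
Proof. by move=> sLK Ku l Ll; rewrite derg1 mem_commg // (subsetP sLK). Qed.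

Lemma index_subcent1_der (L : {group gT}) u :
  L \subset K -> u \in K -> ~~ (L \subset 'C[u]) -> #|L : 'C_L[u]| = q.
Proof.
move=> sLK Ku /subsetPn[v Lv /cent1P cvu].
rewrite -(card_morphim_commg (commK_der sLK Ku) (subset_trans sLK cKK')).
by rewrite (morphim_commg_prime _ _ _ Lv) ?oK' //; apply/commgP.
Qed.

Lemma subcent1_mul_cycle (L : {group gT}) u v :
  L \subset K -> u \in K -> v \in L -> [~ v, u] != 1 -> L \subset 'C_L[u] * <[v]>.
Proof.
move=> sLK Ku Lv ntvu.
pose f := commg_morphism (commK_der sLK Ku) (subset_trans sLK cKK').
have defK' : <[f v]> = K^`(1).
  apply: (prime_subgroup_eq _ _ (cycle_id _) ntvu); first by rewrite oK'.
  by rewrite cycle_subG; apply: (commK_der sLK Ku Lv).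
apply/subsetP=> c Lc.
have: f c \in <[f v]> by rewrite defK'; apply: (commK_der sLK Ku Lc).
case/cycleP=> i fc; rewrite -(mulgKV (v ^+ i) c) mem_mulg ?mem_cycle //.
rewrite -(ker_commg_morphism (commK_der sLK Ku) (subset_trans sLK cKK')) -/f.
have Lci : c * (v ^+ i)^-1 \in L by rewrite groupM ?groupV ?groupX.
apply/(kerP _ Lci).
by rewrite morphM ?groupV ?groupX // morphV ?groupX // morphX // fc mulgV.
Qed.

Section TwoGenerators.

Variables x y : gT.
Hypotheses (Kx : x \in K) (Ky : y \in K) (ntyx : [~ y, x] != 1).

Let H := 'C_('C_K[x])[y].

Let ntxy : [~ x, y] != 1.
Proof. by rewrite -invgR eq_invg1. Qed.

Lemma index_subcent2 : #|K : H| = (q ^ 2)%N.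
Proof.
have sKxK : 'C_K[x] \subset K := subsetIl _ _.
have nsKx : ~~ (K \subset 'C[x]).
  by apply/subsetPn; exists y => //; apply: contra ntyx => /cent1P/commgP.
have nsKxy : ~~ ('C_K[x] \subset 'C[y]).
  apply/subsetPn; exists x; first by rewrite inE Kx cent1id.
  by apply: contra ntxy => /cent1P/commgP.
by rewrite -(Lagrange_index sKxK (subsetIl _ 'C[y])) !index_subcent1_der // mulnn.
Qed.

Lemma center_subcent2 : 'Z(H) = 'Z(K).
Proof.
have Kxx : x \in 'C_K[x] by rewrite inE Kx cent1id.
have sKH : K \subset H * <[x]> * <[y]>.
  apply: subset_trans (subcent1_mul_cycle (subxx K) Kx Ky ntyx) _.
  by apply/mulSg/subcent1_mul_cycle; rewrite ?subsetIl.
have sHK : H \subset K := subset_trans (subsetIl _ _) (subsetIl _ _).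
apply/eqP; rewrite eqEsubset; apply/andP; split.
  rewrite subsetI (subset_trans (center_sub H)) //= centsC.
  apply: subset_trans sKH _; rewrite !mul_subG ?cycle_subG //.
  - by rewrite centsC subsetIr.
  - by rewrite -sub_cent1 (subset_trans (center_sub H)) // subIset // subsetIr.
  by rewrite -sub_cent1 (subset_trans (center_sub H)) // subsetIr.
rewrite subsetI (subset_trans _ (centS sHK)) ?subsetIr // andbT.
apply/subsetP=> z Zz; have [Kz cKz] := setIP Zz.
by rewrite !in_setI Kz /=; apply/andP; split; apply/cent1P; apply: (centP cKz).
Qed.

End TwoGenerators.

End PrimeCentralDerived.

Lemma index_center_sq (gT : finGroupType) (q : nat) (K : {group gT}) :
  prime q -> #|K^`(1)| %| q -> K^`(1) \subset 'Z(K) ->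
  exists s, #|K : 'Z(K)| = (q ^ (2 * s))%N.
Proof.
move=> pr_q; have [n] := ubnP #|K|; elim: n K => // n IHn K /ltnSE leKn dK' sK'Z.
have [abK | nabK] := boolP (abelian K).
  by exists 0; rewrite (center_idP abK) indexgg.
have oK' : #|K^`(1)| = q.
  have /primeP[_ dvq] := pr_q; case/orP: (dvq _ dK') => /eqP // oK'1.
  by case/negP: nabK; apply/derG1P/card1_trivg.
have [x Kx /subsetPn[y Ky nxy]] : exists2 x, x \in K & ~~ (K \subset 'C[x]).
  by case/subsetPn: nabK => x Kx; exists x; rewrite // sub_cent1.
have ntyx : [~ y, x] != 1 by apply: contra nxy => /commgP/cent1P.
set H := 'C_('C_K[x])[y]%G.
have sHK : H \subset K := subset_trans (subsetIl _ _) (subsetIl _ _).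
have ZH := center_subcent2 pr_q oK' sK'Z Kx Ky ntyx.
have ltHK : #|H| < n.
  apply: leq_trans leKn; apply: proper_card; rewrite properE sHK /=.
  by apply: contra nxy => /subsetP/(_ y Ky)/setIP[/setIP[]].
have [|s oHZ] := IHn H ltHK (dvdn_trans (cardSg (dergS 1 sHK)) dK').
  by rewrite ZH (subset_trans (dergS 1 sHK)).
exists s.+1; rewrite -ZH -(Lagrange_index sHK (center_sub H)) oHZ.
by rewrite (index_subcent2 pr_q oK' sK'Z Kx Ky ntyx) mulnS expnD.
Qed.

Lemma center_quotientP (gT : finGroupType) (G H : {group gT}) x :
  G \subset 'N(H) -> x \in G ->
  reflect {in G, forall g, [~ g, x] \in H} (coset H x \in 'Z(G / H)).
Proof.
move=> nHG Gx; have nHx := subsetP nHG x Gx.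
apply: (iffP idP) => [/setIP[_ cGHx] g Gg | commGxH].
  have nHg := subsetP nHG g Gg; rewrite -mem_cosetpre_cent1 //.
  apply/morphpreP; split=> //; apply/cent1P/commute_sym.
  by apply: (centP cGHx); apply: mem_quotient.
rewrite inE mem_quotient //=; apply/centP=> _ /morphimP[g nHg Gg ->].
have /morphpreP[_ /cent1P] : g \in coset H @*^-1 'C[coset H x].
  by rewrite mem_cosetpre_cent1 ?commGxH.
exact: commute_sym.
Qed.

Lemma sum_card_subcent1C (gT : finGroupType) (A B : {set gT}) :
  \sum_(x in A) #|'C_B[x]| = \sum_(y in B) #|'C_A[y]|.
Proof.
have cardE (E : {set gT}) x :
    #|'C_E[x]| = \sum_(y in E) (if y \in 'C[x] then 1 else 0).
  by rewrite -sum1_card -big_mkcondr; apply: eq_bigl => y; rewrite inE.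
under eq_bigr do rewrite cardE; rewrite exchange_big /=.
by apply: eq_bigr => y _; rewrite cardE; apply: eq_bigr => x _; rewrite cent1C.
Qed.

Lemma card_comm_pairs (gT : finGroupType) (G : {set gT}) :
  #|comm_pairs G| = \sum_(x in G) #|'C_G[x]|.
Proof.
under eq_bigr do rewrite -sum1_card.
rewrite pair_big_dep /= -sum1_card; apply: eq_bigl => -[x y] /=.
rewrite inE in_setX in_setI /=; case: (x \in G) => //=; case: (y \in G) => //=.
by apply/eqP/cent1P => /esym.
Qed.

Lemma sum_setD_const (T : finType) (A B : {set T}) (F : T -> nat) k :
  B \subset A -> {in A :\: B, forall x, F x = k} ->
  (\sum_(x in A | x \notin B) F x = (#|A| - #|B|) * k)%N.
Proof.
move=> sBA FE; rewrite -cardsDS // -sum_nat_const.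
apply: eq_big => x; first by rewrite inE andbC.
by move=> ABx; apply: FE; rewrite inE andbC.
Qed.

Lemma sum_setI_sub (T : finType) (A B : {set T}) (F : T -> nat) :
  B \subset A -> (\sum_(x in A | x \in B) F x = \sum_(x in B) F x)%N.
Proof.
by move=> sBA; apply: eq_bigl => x; rewrite andb_idl // => /(subsetP sBA).
Qed.

Section Theorem3p5.

Variables (gT : finGroupType) (G : {group gT}) (p : nat).
Hypotheses (pr_p : prime p) (coprime_p1G : coprime (p - 1) #|G|).
Hypotheses (oD : #|G^`(1)| = (p ^ 2)%N) (oN : #|G^`(1) :&: 'Z(G)| = p).

Local Notation D := G^`(1).
Local Notation Z := 'Z(G).
Local Notation N := (G^`(1) :&: 'Z(G)).
Local Notation C := 'C_G(G^`(1)).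

Let p_gt0 : 0 < p := prime_gt0 pr_p.
Let p_neq0 : (p%:R != 0 :> rat)%R. Proof. by rewrite pnatr_eq0 -lt0n. Qed.
Let sDG : D \subset G := der_sub 1 G.
Let nDG : G \subset 'N(D) := der_norm 1 G.
Let sND : N \subset D := subsetIl _ _.
Let sNZ : N \subset Z := subsetIr _ _.
Let cGZ : G \subset 'C(Z). Proof. by rewrite centsC subsetIr. Qed.
Let cGN : G \subset 'C(N) := subset_trans cGZ (centS sNZ).
Let nNG : G \subset 'N(N) := cents_norm cGN.
Let sCG : C \subset G := subsetIl _ _.
Let cCD : C \subset 'C(D) := subsetIr _ _.
Let abD : abelian D := card_p2group_abelian pr_p oD.
Let sDC : D \subset C. Proof. by rewrite subsetI sDG. Qed.

Let commg_der g y : g \in G -> y \in G -> [~ g, y] \in D.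
Proof. by move=> Gg Gy; rewrite derg1 mem_commg. Qed.

Lemma index_der_center : #|D : N| = p.
Proof.
by apply/eqP; rewrite -(eqn_pmul2l p_gt0) -{1}oN (Lagrange sND) oD mulnn.
Qed.

(* G / N acts on the group D / N of order p through a subgroup of Aut (D / N),
   whose order p - 1 is coprime to |G|; so the action is trivial. *)
Lemma der_commG : [~: D, G] \subset N.
Proof.
have nND : D \subset 'N(N) := subset_trans sDG nNG.
rewrite -quotient_cents2 //.
have oDN : #|D / N| = p by rewrite card_quotient // index_der_center.
have nDNG : G / N \subset 'N(D / N) := quotient_norms _ nDG.
set f := conj_aut (D / N).
have dv_p1 : #|f @* (G / N)| %| p - 1.
  rewrite [p - 1]subn1 -(totient_prime pr_p) -oDN.
  rewrite -card_Aut_cyclic ?prime_cyclic ?oDN //.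
  exact: cardSg (Aut_conj_aut _ _).
have dvG : #|f @* (G / N)| %| #|G|.
  exact: dvdn_trans (dvdn_morphim _ _) (dvdn_quotient _ _).
have : #|f @* (G / N)| %| gcdn (p - 1) #|G| by rewrite dvdn_gcd dv_p1.
rewrite (eqnP coprime_p1G) dvdn1 card_morphim ker_conj_aut (setIidPr nDNG).
by rewrite -indexgI indexg_eq1 subsetI subxx centsC.
Qed.

Lemma index_cent_der : #|G : C| = p.
Proof.
have /subsetPn[h Dh Nh] : ~~ (D \subset N).
  by rewrite -indexg_gt1 index_der_center prime_gt1.
have commGh : {in G, forall g, [~ g, h] \in N}.
  by move=> g Gg; rewrite -invgR groupV (subsetP der_commG) ?mem_commg.
have defD : <[h]> <*> N = D.
  apply: (prime_index_sub_eq (H := N%G)); rewrite ?joing_subr //.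
  - by rewrite index_der_center.
  - by rewrite join_subG cycle_subG Dh.
  by apply: contra Nh => /subsetP; apply; rewrite mem_gen ?inE ?cycle_id.
have defC : 'C_G[h] = C.
  apply/eqP; rewrite eqEsubset; apply/andP; split; last first.
    by apply/setIS/subsetP=> g cDg; apply/cent1P; apply: (centP cDg).
  rewrite -defD centY cent_cycle setIA subsetI subxx.
  exact: subset_trans (subsetIl _ _) cGN.
have /subsetPn[g Gg cgh] : ~~ (G \subset 'C[h]).
  by rewrite sub_cent1; apply: contra Nh => cGh; rewrite inE Dh inE (subsetP sDG).
rewrite -defC -(card_morphim_commg commGh cGN).
have ntgh : [~ g, h] != 1 by apply: contra cgh => /commgP/cent1P.
by rewrite (morphim_commg_prime _ _ _ Gg ntgh) ?oN.
Qed.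

Lemma cent_der_max (K : {group gT}) :
  C \subset K -> K \subset G -> ~~ (K \subset C) -> K :=: G.
Proof. by apply: prime_index_sub_eq; rewrite index_cent_der. Qed.

Lemma not_sub_cent_der : ~~ (G \subset C).
Proof. by rewrite -indexg_gt1 index_cent_der prime_gt1. Qed.

Lemma commG_in_N x t : x \in G -> t \in G -> t \notin C ->
  {in C, forall c, [~ c, x] \in N} -> [~ t, x] \in N ->
  {in G, forall g, [~ g, x] \in N}.
Proof.
move=> Gx Gt Ct commCxN commtxN.
set K := (G :&: coset N @*^-1 'C[coset N x])%G.
have memK g : g \in G -> (g \in K) = ([~ g, x] \in N).
  by move=> Gg; rewrite in_setI Gg mem_cosetpre_cent1 ?(subsetP nNG).
have defK : K :=: G.
  apply: (cent_der_max _ (subsetIl _ _)).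
    by apply/subsetP=> c Cc; rewrite memK ?commCxN ?(subsetP sCG).
  by apply/subsetPn; exists t; rewrite ?memK.
by move=> g Gg; rewrite -memK // defK.
Qed.

Lemma commg_mulD a b z1 z2 : a \in C -> b \in C -> z1 \in D -> z2 \in D ->
  [~ a * z1, b * z2] = [~ a, b].
Proof.
move=> Ca Cb Dz1 Dz2; have [Ga Gb] := (subsetP sCG a Ca, subsetP sCG b Cb).
have cCD1 c z : c \in C -> z \in D -> [~ c, z] = 1.
  by move=> Cc Dz; apply/eqP/commgP; apply: (centP (subsetP cCD c Cc)).
have fixD z : z \in D -> [~ a, b] ^ z = [~ a, b].
  by move=> Dz; apply/conjg_fixP/commgP; apply: (centsP abD); rewrite ?commg_der.
have Cbz2 : b * z2 \in C by rewrite groupM // (subsetP sDC).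
rewrite commMgJ commgMJ (cCD1 a z2) // -(invgR (b * z2)) (cCD1 _ z1) // invg1.
by rewrite mul1g mulg1 !fixD.
Qed.

Lemma der_cent_der_sub : C^`(1) \subset N.
Proof.
have /subsetPn[t Gt Ct] := not_sub_cent_der.
have sC'D : C^`(1) \subset D by apply: dergS.
rewrite subsetI sC'D subsetI (subset_trans sC'D sDG) centsC /=.
have sCK : C \subset 'C_G(C^`(1)).
  by rewrite subsetI sCG centsC (subset_trans sC'D) // centsC.
have Kt : t \in 'C_G(C^`(1)).
  rewrite inE Gt derg1 cent_gen; apply/centP=> _ /imset2P[a b Ca Cb ->].
  have [Ga Gb] := (subsetP sCG a Ca, subsetP sCG b Cb).
  apply/commute_sym/commgP/conjg_fixP.
  by rewrite conjRg !conjg_mulR commg_mulD ?commg_der.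
have nsKC : ~~ ('C_G(C^`(1)) \subset C) by apply/subsetPn; exists t.
by rewrite -{1}(cent_der_max sCK (subsetIl _ _) nsKC) subsetIr.
Qed.

Let commC_der y : y \in G -> {in C, forall c, [~ c, y] \in D}.
Proof. by move=> Gy c Cc; apply: commg_der; first apply: (subsetP sCG). Qed.

Lemma morphim_commg_cent_der y (Gy : y \in G) :
  y \notin C -> commg_morphism (commC_der Gy) cCD @* C = D.
Proof.
move=> Cy; apply: (prime_index_sub_eq (H := N%G)).
- by rewrite index_der_center.
- have /subsetPn[h Dh chy] : ~~ (D \subset 'C[y]).
    by rewrite sub_cent1; apply: contra Cy => cDy; rewrite inE Gy.
  apply: prime_meetG; first by rewrite oN.
  apply/trivgPn; exists [~ h, y]; last by apply: contra chy => /commgP/cent1P.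
  rewrite in_setI (subsetP der_commG) ?mem_commg //.
  exact: mem_morphim_commg (subsetP sDC h Dh).
- exact: morphim_commg_sub.
apply: (contra _ Cy) => sfN; apply: mem_cent_der => // g Gg.
apply: (subsetP sNZ); apply: (commG_in_N Gy Gy Cy) => //.
  by move=> c Cc; apply: (subsetP sfN); apply: mem_morphim_commg.
by rewrite commgg group1.
Qed.

Lemma index_subcent1_cent_der y :
  y \in G -> y \notin C -> #|C : 'C_C[y]| = (p ^ 2)%N.
Proof.
move=> Gy Cy; rewrite -(card_morphim_commg (commC_der Gy) cCD).
by rewrite morphim_commg_cent_der.
Qed.

Lemma card_subcent1_notin_cent_der y :
  y \in G -> y \notin C -> #|'C_G[y]| = (p * #|'C_C[y]|)%N.
Proof.
move=> Gy Cy; have sGyG : 'C_G[y] \subset G := subsetIl _ _.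
have defG : C * 'C_G[y] = G.
  rewrite -norm_joinEr ?(subset_trans sGyG) ?normsI ?normG ?norms_cent //.
  apply: cent_der_max; first exact: joing_subl.
    by rewrite join_subG sCG subsetIl.
  apply/subsetPn; exists y => //; apply: (subsetP (joing_subr _ _)).
  by rewrite inE Gy cent1id.
have := mul_cardG C 'C_G[y]; rewrite defG setIA (setIidPl sCG).
rewrite -(Lagrange sCG) index_cent_der -mulnA => /eqP.
by rewrite eqn_pmul2l ?cardG_gt0 // => /eqP.
Qed.

Lemma index_quotient_center (H : {group gT}) :
  N \subset H -> H \subset Z -> #|G / H : 'Z(G / H)| = (p ^ 2)%N.
Proof.
move=> sNH sHZ; have sHG : H \subset G := subset_trans sHZ (center_sub G).
have nHG : G \subset 'N(H) := cents_norm (subset_trans cGZ (centS sHZ)).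
have nsHG : H <| G by rewrite /normal sHG nHG.
have /subsetPn[t Gt Ct] := not_sub_cent_der.
set f := commg_morphism (commC_der Gt) cCD.
have defZ : coset H @*^-1 'Z(G / H) = f @*^-1 N.
  apply/setP=> x; apply/idP/idP => [/morphpreP[nHx ZGHx] | /morphpreP[Cx xtN]].
    have Gx : x \in G.
      rewrite -(quotientGK nsHG); apply/morphpreP; split=> //.
      exact: (subsetP (center_sub _)).
    have /(center_quotientP nHG Gx) commGxH := ZGHx.
    have Cx : x \in C.
      by apply: mem_cent_der => // g Gg; apply: (subsetP sHZ); apply: commGxH.
    apply/morphpreP; split=> //; rewrite commg_morphismE in_setI commg_der //=.
    by rewrite (subsetP sHZ) // -invgR groupV commGxH.
  have Gx := subsetP sCG x Cx.
  have commGxN : {in G, forall g, [~ g, x] \in N}.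
    apply: (commG_in_N Gx Gt Ct); last by rewrite -invgR groupV.
    by move=> c Cc; apply: (subsetP der_cent_der_sub); rewrite derg1 mem_commg.
  apply/morphpreP; split; first exact: (subsetP nHG).
  by apply/(center_quotientP nHG Gx) => g Gg; apply: (subsetP sNH); apply: commGxN.
rewrite -index_cosetpre (quotientGK nsHG) defZ.
rewrite -(Lagrange_index sCG (morphpre_sub f N)) index_cent_der.
have fC : f @*^-1 D = C.
  apply/eqP; rewrite eqEsubset morphpre_sub /=; apply/subsetP=> c Cc.
  by apply/morphpreP; split; last apply: commC_der.
rewrite /= -{1}fC index_morphpre ?index_der_center //.
by rewrite (morphim_commg_cent_der Gt Ct).
Qed.

Lemma center_sub_center_cent_der : Z \subset 'Z(C).
Proof.
rewrite subsetI (subset_trans _ (centS sCG)) ?subsetIr // andbT.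
by rewrite subsetI subsetIl (subset_trans _ (centS sDG)) ?subsetIr.
Qed.

Lemma index_center_cent_der_center :
  #|'Z(C) : Z| = p \/ #|'Z(C) : Z| = (p ^ 2)%N.
Proof.
have /subsetPn[t Gt Ct] := not_sub_cent_der.
have sZCC : 'Z(C) \subset C := center_sub C.
have commZt : {in 'Z(C), forall z, [~ z, t] \in D}.
  by move=> z Zz; apply: commC_der (subsetP sZCC z Zz).
set f := commg_morphism commZt (subset_trans sZCC cCD).
have defZ : 'C_('Z(C))[t] = Z.
  apply/eqP; rewrite eqEsubset; apply/andP; split; last first.
    by rewrite subsetI center_sub_center_cent_der sub_cent1 (subsetP cGZ t Gt).
  apply/subsetP=> z /setIP[ZCz czt].
  have [Cz cCz] := setIP ZCz; have Gz := subsetP sCG z Cz.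
  have sCK : C \subset 'C_G[z] by rewrite subsetI sCG sub_cent1.
  have nsKC : ~~ ('C_G[z] \subset C).
    by apply/subsetPn; exists t; rewrite // inE Gt cent1C.
  rewrite inE Gz -sub_cent1 -{1}(cent_der_max sCK (subsetIl _ _) nsKC).
  exact: subsetIr.
have /subsetPn[h Dh cht] : ~~ (D \subset 'C[t]).
  by rewrite sub_cent1; apply: contra Ct => cDt; rewrite inE Gt.
have ZCh : h \in 'Z(C).
  by rewrite inE (subsetP sDC) // (subsetP _ h Dh) // centsC.
rewrite -defZ -(card_morphim_commg commZt (subset_trans sZCC cCD)) -/f.
have := cardSg (morphim_commg_sub commZt (subset_trans sZCC cCD)).
rewrite oD => /(dvdn_pfactor _ _ pr_p)[[|[|[|k]]] // _ oim].
- exfalso.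
  have := mem_morphim_commg commZt (subset_trans sZCC cCD) ZCh.
  rewrite -/f (card1_trivg oim) inE; apply/negP.
  by apply: contra cht => /commgP/cent1P.
- by left; rewrite oim expn1.
by right; rewrite oim.
Qed.

Lemma card_quotient_center :
  #|G / Z| = (p * #|C : 'Z(C)| * #|'Z(C) : Z|)%N.
Proof.
have sZC : Z \subset C := subset_trans center_sub_center_cent_der (center_sub C).
rewrite card_quotient ?normal_norm ?center_normal //.
rewrite -(Lagrange_index sCG sZC) index_cent_der.
by rewrite -(Lagrange_index (center_sub C) center_sub_center_cent_der) mulnA.
Qed.

Lemma index_subcent1_cent_der_center y :
  y \in C -> y \notin 'Z(C) -> #|C : 'C_C[y]| = p.
Proof.
move=> Cy ZCy; have cCN : C \subset 'C(N) := subset_trans sCG cGN.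
have commCy : {in C, forall c, [~ c, y] \in N}.
  by move=> c Cc; apply: (subsetP der_cent_der_sub); rewrite derg1 mem_commg.
have /subsetPn[c Cc cyc] : ~~ (C \subset 'C[y]).
  by rewrite sub_cent1; apply: contra ZCy => cCy; rewrite inE Cy.
rewrite -(card_morphim_commg commCy cCN).
have ntcy : [~ c, y] != 1 by apply: contra cyc => /commgP/cent1P.
by rewrite (morphim_commg_prime _ _ _ Cc ntcy) ?oN.
Qed.

Lemma sum_card_subcent1_cent_der :
  (\sum_(y in C) #|'C_C[y]| = #|'Z(C)| * #|C| + (#|C| - #|'Z(C)|) * (#|C| %/ p))%N.
Proof.
have sZC : 'Z(C) \subset C := center_sub C.
rewrite (bigID (mem 'Z(C))) /= sum_setI_sub // -sum_nat_const; congr (_ + _).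
  apply: eq_bigr => y /setIP[_ cCy].
  by rewrite (setIidPl _) // sub_cent1.
rewrite (sum_setD_const _ (k := (#|C| %/ p)%N)) // => y /setDP[Cy ZCy].
rewrite -(index_subcent1_cent_der_center Cy ZCy).
by rewrite -(Lagrange (subsetIl C 'C[y])) mulnK.
Qed.

Lemma sum_card_subcent1 :
  (\sum_(x in G) #|'C_G[x]| = \sum_(y in C) #|'C_C[y]|
     + (#|G| - #|C|) * (#|C| %/ p ^ 2) + (#|G| - #|C|) * (p * (#|C| %/ p ^ 2)))%N.
Proof.
have cardCy y : y \in G :\: C -> #|'C_C[y]| = (#|C| %/ p ^ 2)%N.
  case/setDP=> Gy Cy; rewrite -(index_subcent1_cent_der Gy Cy).
  by rewrite -(Lagrange (subsetIl C 'C[y])) mulnK.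
rewrite (bigID (mem C)) /= sum_setI_sub //.
rewrite (sum_setD_const _ (k := (p * (#|C| %/ p ^ 2))%N)) //; last first.
  move=> y GCy; have /setDP[Gy Cy] := GCy.
  by rewrite card_subcent1_notin_cent_der // cardCy.
congr (_ + _); rewrite sum_card_subcent1C (bigID (mem C)) /= sum_setI_sub //.
by rewrite (sum_setD_const _ cardCy).
Qed.

Lemma comm_degree_cent_der :
  comm_degree G = (((\sum_(y in C) #|'C_C[y]|)%:R / (#|C| ^ 2)%N%:R
                    + (p%:R ^+ 2 - 1) / p%:R ^+ 2) / p%:R ^+ 2 : rat)%R.
Proof.
have /subsetPn[t Gt Ct] := not_sub_cent_der.
have /dvdnP[c oC] : (p ^ 2 %| #|C|)%N.
  by rewrite -(index_subcent1_cent_der Gt Ct) dvdn_indexg.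
have c_gt0 : (0 < c)%N by move: (cardG_gt0 C); rewrite oC muln_gt0 => /andP[].
have oG : #|G| = (p * #|C|)%N by rewrite -(Lagrange sCG) index_cent_der mulnC.
rewrite /comm_degree card_comm_pairs sum_card_subcent1 oG.
have -> : (p * #|C| - #|C| = (p - 1) * #|C|)%N by rewrite mulnBl mul1n.
rewrite oC mulnK ?expn_gt0 ?p_gt0 //.
rewrite !natrD !natrM (natrB _ p_gt0).
have c0 : (c%:R != 0 :> rat)%R by rewrite pnatr_eq0 -lt0n.
by field; rewrite p_neq0 c0.
Qed.

Lemma comm_degree_abelian :
  abelian C -> comm_degree G = ((2 * p%:R ^+ 2 - 1) / p%:R ^+ 4)%R.
Proof.
move=> abC; rewrite comm_degree_cent_der sum_card_subcent1_cent_der.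
rewrite (center_idP abC) subnn mul0n addn0 mulnn divff.
  by field; rewrite p_neq0.
by rewrite pnatr_eq0 -lt0n expn_gt0 cardG_gt0.
Qed.

Lemma comm_degree_nonabelian s :
  (0 < s)%N -> (p ^ (2 * s))%N = #|C : 'Z(C)| ->
  comm_degree G = (((p%:R - 1) / p%:R ^+ (2 * s - 1) + p%:R ^+ 2 + p%:R - 1)
                   / p%:R ^+ 4 : rat)%R.
Proof.
move=> s_gt0 oCZ; rewrite comm_degree_cent_der sum_card_subcent1_cent_der.
have oC : #|C| = (#|'Z(C)| * p ^ (2 * s - 1) * p)%N.
  by rewrite -mulnA -expnSr subn1 prednK ?muln_gt0 // oCZ Lagrange ?center_sub.
have zC : (#|'Z(C)| <= #|'Z(C)| * p ^ (2 * s - 1) * p)%N.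
  by rewrite -mulnA leq_pmulr // muln_gt0 expn_gt0 p_gt0.
rewrite oC mulnK // natrD !natrM (natrB _ zC) -(natrX rat p (2 * s - 1)).
set Q := (p ^ (2 * s - 1))%N.
have z0 : (#|'Z(C)|%:R != 0 :> rat)%R by rewrite pnatr_eq0 -lt0n cardG_gt0.
have Q0 : (Q%:R != 0 :> rat)%R by rewrite pnatr_eq0 -lt0n expn_gt0 p_gt0.
by field; rewrite p_neq0 z0 Q0.
Qed.

Lemma card_quotient_center_abelian : abelian C -> #|G / Z| = (p ^ 3)%N.
Proof.
move=> abC; have oGZ := card_quotient_center.
have iCZ : #|C : 'Z(C)| = 1%N by rewrite (center_idP abC) indexgg.
rewrite iCZ muln1 in oGZ; rewrite oGZ.
case: index_center_cent_der_center => oZCZ; rewrite oZCZ; last by rewrite -expnS.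
have abGZ : abelian (G / Z).
  by apply: (card_p2group_abelian pr_p); rewrite oGZ oZCZ mulnn.
have sDN : D \subset N.
  by rewrite subsetI subxx der1_min ?normal_norm ?center_normal.
by move: (prime_gt1 pr_p); rewrite -index_der_center indexg_gt1 sDN.
Qed.

Lemma card_quotient_center_nonabelian s : (p ^ (2 * s))%N = #|C : 'Z(C)| ->
  #|G / Z| = (p ^ (2 * s + 2))%N \/ #|G / Z| = (p ^ (2 * s + 3))%N.
Proof.
move=> oCZ; rewrite card_quotient_center -oCZ -expnS.
case: index_center_cent_der_center => ->; [left | right].
  by rewrite -expnSr addn2.
by rewrite -expnD addSn addn2 addn3.
Qed.

Lemma index_center_cent_der_sq :
  ~~ abelian C -> exists2 s, (0 < s)%N & (p ^ (2 * s))%N = #|C : 'Z(C)|.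
Proof.
move=> nabC.
have dvC'p : (#|C^`(1)| %| p)%N by rewrite -oN cardSg ?der_cent_der_sub.
have sC'ZC : C^`(1) \subset 'Z(C).
  rewrite subsetI der_sub (subset_trans der_cent_der_sub) // (subset_trans sNZ) //.
  by rewrite centsC (subset_trans sCG cGZ).
have [s oCZ] := index_center_sq pr_p dvC'p sC'ZC.
exists s => //; rewrite lt0n; apply: contra nabC => /eqP s0.
move: oCZ; rewrite s0 muln0 expn0 => /eqP; rewrite indexg_eq1 => sCZ.
exact: abelianS sCZ (center_abelian C).
Qed.

End Theorem3p5.

Close Scope group_scope.
Unset Implicit Arguments.

Theorem theorem3p5 (gT : finGroupType) (G : {group gT}) (p : nat) :
  prime p ->
  coprime (p - 1) #|G| ->
  #|G^`(1)%g| = (p ^ 2)%N ->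
  #|(G^`(1) :&: 'Z(G))%g| = p ->
  (abelian 'C_G(G^`(1))%g ->
     comm_degree G = ((2 * p%:R ^+ 2 - 1) / p%:R ^+ 4)%R
     /\ #|(G / 'Z(G))%g| = (p ^ 3)%N)
  /\
  (~~ abelian 'C_G(G^`(1))%g ->
     exists s : nat,
       [/\ 0 < s,
           (p ^ (2 * s))%N = #|'C_G(G^`(1)) : 'Z('C_G(G^`(1)))|%g,
           comm_degree G =
             (((p%:R - 1) / p%:R ^+ (2 * s - 1) + p%:R ^+ 2 + p%:R - 1)
               / p%:R ^+ 4 : rat)%R
         & #|(G / 'Z(G))%g| = (p ^ (2 * s + 2))%N
           \/ #|(G / 'Z(G))%g| = (p ^ (2 * s + 3))%N])
  /\
  #|(G / (G^`(1) :&: 'Z(G))) : 'Z(G / (G^`(1) :&: 'Z(G)))|%g = (p ^ 2)%N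
  /\
  #|(G / 'Z(G)) : 'Z(G / 'Z(G))|%g = (p ^ 2)%N.
Proof.
move=> pr_p cop oD oN; split; [|split; [|split]].
- by move=> abC; split; [apply: comm_degree_abelian | apply: card_quotient_center_abelian].
- move=> nabC; have [s s_gt0 oCZ] := index_center_cent_der_sq pr_p cop oD oN nabC.
  exists s; split=> //; first exact: comm_degree_nonabelian.
  exact: card_quotient_center_nonabelian.
- by apply: index_quotient_center => //; apply: subsetIr.
by apply: index_quotient_center => //; apply: subsetIr.
Qed.
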